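(* Let $k$ be a positive integer, let $f$ be a $(2k+1)$-coloring automorphism, and let $L$ be a link with $\det L\neq0$ admitting non-trivial $(2k+1)$-colorings. Then no set $S\subseteq\{f(0),f(1),\dots,f(k)\}$ is a $(2k+1)$-sufficient set of colors for $L$.
   Context: For a positive integer $n$, an $n$-coloring of a link diagram is an assignment of an element of $\mathbf{Z}/n\mathbf{Z}$ to each arc such that at every crossing, with over-arc color $b$ and under-arc colors $a,c$, $2b-a-c\equiv 0\pmod n$; it is non-trivial if at least two distinct colors are used. An $n$-coloring automorphism is a permutation $f$ of $\mathbf{Z}/n\mathbf{Z}$ satisfying $f(2b-a)=2f(b)-f(a)$ for all $a,b$. An $n$-sufficient set of colors for $L$ is a set of residues mod $n$ such that some diagram of $L$ admits a non-trivial $n$-coloring using only colors from this set. $\det L$ is the determinant of $L$. *)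

From mathcomp Require Import all_boot all_order all_algebra.
Set Implicit Arguments. Unset Strict Implicit. Unset Printing Implicit Defensive.
Import GRing.Theory Num.Theory.
Local Open Scope ring_scope.

(* A (combinatorial) link diagram: arcs are 0 .. narcs-1; each crossing is
   a triple (over-arc, under-arc, under-arc). *)
Record diagram := Diagram {
  narcs : nat;
  crossings : seq ('I_narcs * 'I_narcs * 'I_narcs) }.

Definition is_coloring' (n : nat) (D : diagram) (col : 'I_(narcs D) -> 'Z_n) : Prop :=
  forall b a c, (b, a, c) \in crossings D -> 2%:R * col b - col a - col c = 0.

Definition nontrivial_coloring (n : nat) (D : diagram) (col : 'I_(narcs D) -> 'Z_n) : Prop :=
  is_coloring' col /\ exists i j, col i != col j.

Definition coloring_automorphism (n : nat) (f : 'Z_n -> 'Z_n) : Prop :=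
  bijective f /\ forall a b : 'Z_n, f (2%:R * b - a) = 2%:R * f b - f a.

Definition sufficient_for_diagram (n : nat) (D : diagram) (S : {set 'Z_n}) : Prop :=
  exists col : 'I_(narcs D) -> 'Z_n, nontrivial_coloring col /\ forall i, col i \in S.

(* Coloring matrix (rows = crossings, columns = arcs), entries over int. *)
Definition crossing_nat (D : diagram) : seq (nat * nat * nat) :=
  [seq (val x.1.1, val x.1.2, val x.2) | x <- crossings D].

Definition cmx_entry (x : nat * nat * nat) (j : nat) : int :=
  2%:Z * (x.1.1 == j)%:Z - (x.1.2 == j)%:Z - (x.2 == j)%:Z.

Definition first_minor (D : diagram) : 'M[int]_((narcs D).-1) :=
  \matrix_(i, j) cmx_entry (nth (0%N, 0%N, 0%N) (crossing_nat D) i.+1) j.+1.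

(* Determinant of the link presented by D: |first minor of the coloring matrix|
   when #crossings = #arcs (no crossingless components); a diagram with a
   crossingless component is split (det 0) unless it is the trivial
   one-arc diagram of the unknot (det 1). *)
Definition det_diagram (D : diagram) : nat :=
  if size (crossings D) == narcs D then `|\det (first_minor D)|%N
  else if (crossings D == [::]) && (narcs D == 1%N) then 1%N else 0%N.

(* A nontrivial coloring by f(0), ..., f(k) pulls back along f^-1 to a
   nontrivial coloring by 0, ..., k.  Since 2k < 2k+1, every crossing
   relation 2b = a + c (mod 2k+1) between such values already holds in the
   integers, so the diagram has a nonconstant integer coloring.  Its
   differences to the color of arc 0 form a nonzero kernel vector of the first
   minor of the coloring matrix, hence det L = 0. *)

From mathcomp Require Import all_boot all_order all_algebra.
From mathcomp Require Import zify ring.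
Set Implicit Arguments. Unset Strict Implicit. Unset Printing Implicit Defensive.
Import GRing.Theory Num.Theory.
Local Open Scope ring_scope.

Definition is_int_coloring (D : diagram) (w : 'I_(narcs D) -> int) : Prop :=
  forall b a c, (b, a, c) \in crossings D -> 2 * w b - w a - w c = 0.

Lemma sum_eq_indicator_mul (N : nat) (b : 'I_N) (F : 'I_N -> int) :
  \sum_(m < N) (nat_of_bool (val b == val m))%:Z * F m = F b.
Proof.
rewrite (bigD1 b) //= eqxx mul1r big1 ?addr0 // => m hmb.
by rewrite (_ : (val b == val m) = false) ?mul0r //; apply/negbTE; rewrite eq_sym.
Qed.

Lemma sum_cmx_entry (N : nat) (b a c : 'I_N) (V : 'I_N -> int) :
  \sum_(m < N) cmx_entry (val b, val a, val c) m * V m = 2 * V b - V a - V c.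
Proof.
rewrite /cmx_entry /=.
under eq_bigr do rewrite !mulrBl -mulrA.
by rewrite !sumrB -mulr_sumr !sum_eq_indicator_mul.
Qed.

Lemma det_eq0_of_kernel (R : idomainType) (n : nat) (A : 'M[R]_n) (u : 'cV_n) :
  u != 0 -> A *m u = 0 -> \det A = 0.
Proof.
move=> u_neq0 Au0; apply/eqP; rewrite -det_tr; apply/det0P.
by exists u^T; rewrite ?trmx_eq0 // -trmx_mul Au0 trmx0.
Qed.

Lemma det_first_minor_eq0 (D : diagram) (w : 'I_(narcs D) -> int) :
  size (crossings D) = narcs D -> is_int_coloring w ->
  (exists i j, w i != w j) -> \det (first_minor D) = 0.
Proof.
case: D w => n cr /= w; case: n cr w => [|n] cr w hsz hw [i [j hij]].
  by case: i hij.
pose V (m : 'I_n.+1) := w m - w ord0.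
apply: (@det_eq0_of_kernel _ _ _ (\col_m V (lift ord0 m))).
  have [t wt] : exists t, w t != w ord0.
    have [wi|] := eqVneq (w i) (w ord0); last by exists i.
    by exists j; rewrite -wi eq_sym.
  case: (unliftP ord0 t) wt => [t' -> | ->]; last by rewrite eqxx.
  move=> wt.
  apply/eqP => /matrixP/(_ t' 0); rewrite !mxE => /eqP.
  by rewrite subr_eq0 (negbTE wt).
apply/matrixP => r z; rewrite !mxE.
under eq_bigr do rewrite !mxE.
have : nth (0, 0, 0)%N (crossing_nat (Diagram cr)) r.+1
         \in crossing_nat (Diagram cr).
  by apply: mem_nth; rewrite size_map /= hsz ltnS.
case/mapP => [[[b a] c] hbac ->] /=.
have -> : \sum_(m < n) cmx_entry (val b, val a, val c) m.+1 * V (lift ord0 m)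
        = \sum_(m < n.+1) cmx_entry (val b, val a, val c) m * V m.
  by rewrite big_ord_recl /V subrr mulr0 add0r.
by rewrite sum_cmx_entry /V -(hw _ _ _ hbac); ring.
Qed.

Lemma det_diagram_eq0 (D : diagram) (w : 'I_(narcs D) -> int) :
  is_int_coloring w -> (exists i j, w i != w j) -> det_diagram D = 0%N.
Proof.
move=> hw [i [j hij]]; rewrite /det_diagram.
case: eqP => [hsz|_]; first by rewrite (det_first_minor_eq0 hsz hw) //; exists i, j.
case: ifP => // /andP [_ /eqP n1].
have ij : i = j by apply: ord_inj; move: (ltn_ord i) (ltn_ord j) n1; lia.
by rewrite ij eqxx in hij.
Qed.

Lemma int_coloring_of_small (n k : nat) (D : diagram)
    (col : 'I_(narcs D) -> 'Z_n) :
  (1 < n)%N -> (2 * k < n)%N -> (forall i, col i <= k)%N ->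
  is_coloring' col -> is_int_coloring (fun i => (col i : nat)%:Z).
Proof.
move=> n_gt1 kn col_le hcol b a c /hcol hbac.
have e : ((2 * col b)%N%:R : 'Z_n) = (col a + col c)%N%:R.
  rewrite natrM natrD !natr_Zp; apply/eqP; rewrite -subr_eq0; apply/eqP.
  by rewrite -hbac; ring.
have := congr1 (@nat_of_ord _) e; rewrite !val_Zp_nat // !modn_small; first lia.
- by have := col_le a; have := col_le c; lia.
- by have := col_le b; lia.
Qed.

Lemma coloring_comp (n : nat) (D : diagram) (g : 'Z_n -> 'Z_n)
    (col : 'I_(narcs D) -> 'Z_n) :
  (forall a b, g (2%:R * b - a) = 2%:R * g b - g a) ->
  is_coloring' col -> is_coloring' (g \o col).
Proof.
move=> ghom hcol b a c /hcol /eqP; rewrite subr_eq add0r => /eqP cc.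
by rewrite /= -ghom cc subrr.
Qed.

Lemma coloring_automorphism_inv (n : nat) (f g : 'Z_n -> 'Z_n) :
  coloring_automorphism f -> cancel f g -> cancel g f ->
  forall a b, g (2%:R * b - a) = 2%:R * g b - g a.
Proof.
by case=> _ fhom fg gf a b; apply: (can_inj fg); rewrite fhom !gf.
Qed.

Theorem corollary4p1 (k : nat) (hk : (0 < k)%N)
  (f : 'Z_(2 * k + 1) -> 'Z_(2 * k + 1)) (hf : coloring_automorphism f)
  (D : diagram) (hdet : det_diagram D <> 0%N)
  (hcol : exists col : 'I_(narcs D) -> 'Z_(2 * k + 1), nontrivial_coloring col)
  (S : {set 'Z_(2 * k + 1)})
  (hS : S \subset [set f (i%:R) | i : 'I_k.+1]) :
  ~ sufficient_for_diagram D S.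
Proof.
move=> [col [[hc [i [j hij]]] colS]].
have [[g fg gf] _] := hf.
have n_gt1 : (1 < 2 * k + 1)%N by lia.
have k_small : (2 * k < 2 * k + 1)%N by lia.
have gcol_le t : (g (col t) <= k)%N.
  have /imsetP [m _ ->] := subsetP hS _ (colS t).
  by rewrite fg val_Zp_nat // -ltnS (leq_ltn_trans (leq_mod _ _)).
have hw := int_coloring_of_small n_gt1 k_small gcol_le
             (coloring_comp (coloring_automorphism_inv hf fg gf) hc).
apply/hdet/(det_diagram_eq0 hw); exists i, j.
by apply: contra hij => /eqP [/ord_inj/(can_inj gf) ->].
Qed.
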